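(* In the DID setting of the context with $N_1=1$ (single treated unit, indexed $1$), suppose Assumption 1 holds. Consider testing $H_0:\alpha=\alpha_0$ at level $\tau\in(0,1)$ by rejecting when $\widehat\alpha-\alpha_0$ is below the $\tau/2$-quantile or above the $1-\tau/2$-quantile of the empirical distribution $\widehat F$ of the control residuals $\{\widehat W_i\}_{i\in\mathcal I_0}$. Then, under $H_0$, the rejection probability converges to $\tau$ as $N_0\to\infty$ (the test is asymptotically valid), even though the errors may be spatially correlated.
   Context: Units $i\in\mathcal I_1$ (treated, $|\mathcal I_1|=N_1$) and $i\in\mathcal I_0$ (control, $|\mathcal I_0|=N_0$), periods $t=1,\dots,T$; $\mathcal T_0=\{1,\dots,t^\ast\}$, $\mathcal T_1=\{t^\ast+1,\dots,T\}$, $T$ fixed. Potential outcomes: $Y_{it}(0)=\theta_i+\gamma_t+\eta_{it}$, $Y_{it}(1)=\alpha_{it}+Y_{it}(0)$; observed $Y_{it}=Y_{it}(1)$ if $i\in\mathcal I_1,t\in\mathcal T_1$, else $Y_{it}(0)$. The $\alpha_{it}$ are fixed and $\alpha=\frac{1}{N_1}\frac{1}{T-t^\ast}\sum_{i\in\mathcal I_1}\sum_{t\in\mathcal T_1}\alpha_{it}$. For a sequence $A_t$, $\nabla A=\frac{1}{T-t^\ast}\sum_{t\in\mathcal T_1}A_t-\frac{1}{t^\ast}\sum_{t\in\mathcal T_0}A_t$; $W_i=\nabla\eta_{i\cdot}$. $\widehat\alpha=\frac{1}{N_1}\sum_{i\in\mathcal I_1}\nabla Y_i-\frac{1}{N_0}\sum_{i\in\mathcal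 I_0}\nabla Y_i$; control residuals $\widehat W_i=\nabla Y_i-\frac1{N_0}\sum_{j\in\mathcal I_0}\nabla Y_j$; $\widehat F(c)=N_0^{-1}\sum_{i\in\mathcal I_0}\mathbbm 1\{\widehat W_i\le c\}$. Treatment assignment is fixed. Assumption 1: (i) $\mathbb E[W_i]=0$ for all $i$; (ii) all $W_i$ have the same marginal distribution, with continuous cdf $F$ and finite second moment; (iii) as $N_0\to\infty$, $\frac1{N_0}\sum_{i\in\mathcal I_0}W_i\xrightarrow{p}0$ and $\frac1{N_0}\sum_{i\in\mathcal I_0}\mathbbm 1\{W_i\le c\}\xrightarrow{p}F(c)$ for each $c$. *)

From HB Require Import structures.
From mathcomp Require Import all_boot all_order all_algebra.
From mathcomp Require Import all_classical all_reals all_analysis.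
Set Implicit Arguments. Unset Strict Implicit. Unset Printing Implicit Defensive.
Import Order.TTheory GRing.Theory Num.Theory numFieldNormedType.Exports.
Local Open Scope ring_scope.
Local Open Scope classical_set_scope.

Section DID.
Variable R : realType.

(* Periods t = 1..T are represented by t : 'I_T (0-based);
   pre-treatment periods T_0 = {1,...,t*} are the t with t < tstar,
   post-treatment periods T_1 = {t*+1,...,T} are the t with tstar <= t. *)

Definition nabla (T tstar : nat) (A : 'I_T -> R) : R :=
  (T - tstar)%:R^-1 * (\sum_(t < T | (tstar <= t)%N) A t)
  - tstar%:R^-1 * (\sum_(t < T | (t < tstar)%N) A t).

Definition avg (n : nat) (f : 'I_n -> R) : R := n%:R^-1 * \sum_(i < n) f i.

Definition ecdf (n : nat) (f : 'I_n -> R) (c : R) : R :=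
  n%:R^-1 * \sum_(i < n) (((f i <= c)%R : bool) : nat)%:R.

Definition quantile (G : R -> R) (p : R) : R := inf [set c | p <= G c].

(* DID estimator with one treated unit: Y1 t = outcomes of the treated unit,
   Y0 i t = outcomes of control unit i *)
Definition alpha_hat (T tstar n : nat) (Y1 : 'I_T -> R) (Y0 : 'I_n -> 'I_T -> R)
  : R := nabla tstar Y1 - avg (fun i => nabla tstar (Y0 i)).

Definition W_hat (T tstar n : nat) (Y0 : 'I_n -> 'I_T -> R) (i : 'I_n) : R :=
  nabla tstar (Y0 i) - avg (fun j => nabla tstar (Y0 j)).

Definition reject (T tstar n : nat) (Y1 : 'I_T -> R) (Y0 : 'I_n -> 'I_T -> R)
  (alpha0 tau : R) : bool :=
  let Fh := ecdf (W_hat tstar Y0) in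
  (alpha_hat tstar Y1 Y0 - alpha0 < quantile Fh (tau / 2))
  || (quantile Fh (1 - tau / 2) < alpha_hat tstar Y1 Y0 - alpha0).

End DID.

From HB Require Import structures.
From mathcomp Require Import all_boot all_order all_algebra.
From mathcomp Require Import all_classical all_reals all_analysis.
From mathcomp Require Import lra.
Set Implicit Arguments. Unset Strict Implicit. Unset Printing Implicit Defensive.
Import Order.TTheory GRing.Theory Num.Theory numFieldNormedType.Exports.
Local Open Scope ring_scope.
Local Open Scope classical_set_scope.

(* Write W1 for the before/after contrast (nabla) of the treated unit's errors and
   W0 i for those of the controls.  Since nabla kills unit effects and is additive,
   under the null the estimate minus alpha0 is W1 - avg W0 and the residuals are
   W0 i - avg W0; the common shift cancels, so the test rejects exactly when
   ecdf W0 (W1) < tau/2 or 1 - tau/2 <= ecdf_lt W0 (W1), where ecdf_lt is the left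
   limit of the empirical cdf (this uses an exact description of the empirical
   quantile).  It then suffices that both ecdf W0 (W1) and ecdf_lt W0 (W1) are
   asymptotically uniform: F being a continuous cdf, a point c with F c in
   (a, a + e) (or in (a - e, a)) can be chosen, and away from an event of vanishing probability (the empirical cdf at c
   being far from F c) the statistic is squeezed between F-probabilities close to
   a.  No independence between the treated and the control errors is needed,
   and of Assumption 1 only the common continuous cdf and the pointwise
   convergence of the empirical cdf are used: mean zero, second moments and the
   law of large numbers for the average are not, as the average cancels. *)

Definition freq {R : realType} {n : nat} (b : 'I_n -> bool) : R :=
  n%:R^-1 * \sum_(i < n) (b i : nat)%:R.

Definition ecdf_lt {R : realType} {n : nat} (f : 'I_n -> R) (c : R) : R :=
  freq (fun i => f i < c).

Section EmpiricalCdf.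
Variables (R : realType) (n : nat).
Implicit Types (f : 'I_n -> R) (b : 'I_n -> bool).

Lemma freq_le b1 b2 : (forall i, b1 i -> b2 i) -> freq b1 <= freq b2 :> R.
Proof.
move=> b12; rewrite /freq ler_wpM2l ?invr_ge0 ?ler0n //.
by apply: ler_sum => i _; case: (b1 i) (b12 i) => [->//|_]; rewrite ler0n.
Qed.

Lemma freq_none b : (forall i, ~~ b i) -> freq b = 0 :> R.
Proof.
by move=> nb; rewrite /freq big1 ?mulr0 // => i _; rewrite (negbTE (nb i)).
Qed.

Lemma freq_all b : (0 < n)%N -> (forall i, b i) -> freq b = 1 :> R.
Proof.
move=> n0 bT; rewrite /freq; under eq_bigr => i _ do rewrite bT.
by rewrite sumr_const card_ord -mulr_natr mul1r mulVf // pnatr_eq0 -lt0n.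
Qed.

Lemma ecdfE f c : ecdf f c = freq (fun i => f i <= c).
Proof. by []. Qed.

Lemma ecdf_le f x y : x <= y -> ecdf f x <= ecdf f y.
Proof. by move=> xy; apply: freq_le => i /le_trans; apply. Qed.

Lemma ecdf_lt_le_ecdf f x : ecdf_lt f x <= ecdf f x.
Proof. by apply: freq_le => i /ltW. Qed.

Lemma ecdf_le_ecdf_lt f c x : c < x -> ecdf f c <= ecdf_lt f x.
Proof. by move=> cx; apply: freq_le => i /le_lt_trans; apply. Qed.

Lemma ecdf_lt_le f x c : x <= c -> ecdf_lt f x <= ecdf f c.
Proof. by move=> xc; apply: freq_le => i /lt_le_trans => /(_ _ xc) /ltW. Qed.

Lemma ecdf_shift f x s : ecdf (fun i => f i - s) (x - s) = ecdf f x.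
Proof. by rewrite /ecdf; under eq_bigr => i _ do rewrite lerD2r. Qed.

Lemma ecdf_lt_shift f x s : ecdf_lt (fun i => f i - s) (x - s) = ecdf_lt f x.
Proof. by rewrite /ecdf_lt /freq; under eq_bigr => i _ do rewrite ltrD2r. Qed.

Lemma finite_gap f x : exists2 m : R, 0 < m & forall i, x < f i -> m <= f i - x.
Proof.
exists (\big[Order.min/1]_(i < n | x < f i) (f i - x)).
  elim/big_ind: _ => // [a b a0 b0|i xi]; first by rewrite lt_min a0 b0.
  by rewrite subr_gt0.
by move=> i xi; rewrite (bigD1 i) //= ge_min lexx.
Qed.

Let Qset f p := [set c : R | p <= ecdf f c].

Let Qset_lbound f p : 0 < p -> lbound (Qset f p) (- \sum_(i < n) `|f i|).
Proof.
move=> p0 c; rewrite /Qset /= => pc; have [i fic] : exists i, f i <= c.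
  apply/not_existsP => none; move: pc; rewrite ecdfE freq_none ?leNgt ?p0 // => i.
  by apply/negP => /none.
apply: le_trans fic; rewrite lerNl (le_trans (ler_norm _)) // normrN.
by rewrite (bigD1 i) //= lerDl sumr_ge0.
Qed.

Let Qset_nonempty f p : (0 < n)%N -> p <= 1 -> Qset f p !=set0.
Proof.
move=> n0 p1; exists (\sum_(i < n) `|f i|); rewrite /Qset /= ecdfE freq_all // => i.
by rewrite (le_trans (ler_norm _)) // (bigD1 i) //= lerDl sumr_ge0.
Qed.

Lemma lt_quantile f p x : (0 < n)%N -> 0 < p <= 1 ->
  (x < quantile (ecdf f) p) = (ecdf f x < p).
Proof.
move=> n0 /andP[p0 p1]; apply/idP/idP => [xq|fxp].
  rewrite ltNge; apply/negP => pfx; move: xq; rewrite ltNge => /negP; apply.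
  by apply: ge_inf => //; exists (- \sum_(i < n) `|f i|); exact: Qset_lbound.
have [m m0 gap] := finite_gap f x.
apply: (@lt_le_trans _ _ (x + m)); first by rewrite ltrDl.
apply: lb_le_inf; first exact: Qset_nonempty.
move=> c pfc; rewrite leNgt; apply/negP => cxm.
have : ecdf f c <= ecdf f x.
  apply: freq_le => i fic; rewrite leNgt; apply/negP => /gap; lra.
rewrite /Qset /= in pfc; lra.
Qed.

Lemma quantile_lt f p x : (0 < n)%N -> 0 < p <= 1 ->
  (quantile (ecdf f) p < x) = (p <= ecdf_lt f x).
Proof.
move=> n0 /andP[p0 p1]; apply/idP/idP.
  move=> /(inf_lt (Qset_nonempty f n0 p1)) [c pfc cx].
  by apply: le_trans pfc _; exact: ecdf_le_ecdf_lt.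
move=> pfx; have [m m0 gap] := finite_gap (fun i => - f i) (- x).
apply: (@le_lt_trans _ _ (x - m)); last by rewrite ltrBlDr ltrDl.
apply: ge_inf; first by exists (- \sum_(i < n) `|f i|); exact: Qset_lbound.
apply: le_trans pfx _; apply: freq_le => i fxi.
have := gap i; rewrite ltrN2 => /(_ fxi); lra.
Qed.

End EmpiricalCdf.

Section Nabla.
Variables (R : realType) (T tstar : nat).
Hypothesis tstar_in : (0 < tstar < T)%N.

Let post_card : \sum_(t < T | (tstar <= t)%N) (1 : R) = (T - tstar)%:R.
Proof.
rewrite -(big_geq_mkord tstar T predT (fun _ => 1)) /=.
by rewrite sumr_const_nat.
Qed.

Let pre_card : \sum_(t < T | (t < tstar)%N) (1 : R) = tstar%:R.
Proof.
case/andP: tstar_in => _ /ltnW leT.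
by rewrite (big_ord_narrow leT) sumr_const card_ord.
Qed.

Lemma nabla_cst (c : R) : nabla tstar (fun _ : 'I_T => c) = 0.
Proof.
case/andP: tstar_in => t0 tT.
rewrite /nabla -[c]mulr1 -!mulr_sumr post_card pre_card.
rewrite [_^-1 * _]mulrCA [tstar%:R^-1 * _]mulrCA !mulVf ?mulr1 ?subrr //.
  by rewrite pnatr_eq0 -lt0n.
by rewrite pnatr_eq0 subn_eq0 -ltnNge.
Qed.

Lemma nablaD (A B : 'I_T -> R) :
  nabla tstar (fun t => A t + B t) = nabla tstar A + nabla tstar B.
Proof. by rewrite /nabla !big_split /=; lra. Qed.

Lemma nabla_effect (a : 'I_T -> R) :
  nabla tstar (fun t => if (tstar <= t)%N then a t else 0) =
  (T - tstar)%:R^-1 * \sum_(t < T | (tstar <= t)%N) a t.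
Proof.
rewrite /nabla (eq_bigr a) => [|t ->//].
by rewrite [X in _ - _ * X]big1 ?mulr0 ?subr0 // => t; case: leqP.
Qed.

End Nabla.

Lemma measurable_nabla (R : realType) (d : measure_display) (Omega : measurableType d)
    (T tstar : nat) (e : 'I_T -> Omega -> R) :
  (forall t, measurable_fun setT (e t)) ->
  measurable_fun setT (fun w => nabla tstar (fun t => e t w)).
Proof.
move=> me; apply: measurable_realfun.measurable_funB;
  apply: measurable_realfun.measurable_funM => //;
  by under eq_fun do rewrite -big_filter; exact: measurable_sum.
Qed.

Lemma avg_addl (R : realType) (n : nat) (c : R) (h : 'I_n -> R) : (0 < n)%N ->
  avg (fun i => c + h i) = c + avg h.
Proof.
move=> n0; rewrite /avg big_split /= sumr_const card_ord mulrDr -[c *+ n]mulr_natr.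
by rewrite mulrCA mulVf ?mulr1 // pnatr_eq0 -lt0n.
Qed.

(* Under the null, the test rejects exactly when the treated error W1 falls in
   one of the two tails of the empirical distribution of the control errors:
   unit and time effects cancel, and the common shift by the average control
   error moves the estimate and the residuals alike. *)
Lemma reject_tails (R : realType) (T tstar n : nat) (a : 'I_T -> R) (th1 : R)
    (g e1 : 'I_T -> R) (th0 : 'I_n -> R) (e0 : 'I_n -> 'I_T -> R) (alpha0 tau : R) :
  (0 < tstar < T)%N -> (0 < n)%N -> 0 < tau < 1 ->
  (T - tstar)%:R^-1 * (\sum_(t < T | (tstar <= t)%N) a t) = alpha0 ->
  let W1 := nabla tstar e1 in let W0 i := nabla tstar (e0 i) in
  reject tstar (fun t => (if (tstar <= t)%N then a t else 0) + th1 + g t + e1 t)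
    (fun i t => th0 i + g t + e0 i t) alpha0 tau =
  (ecdf W0 W1 < tau / 2) || (1 - tau / 2 <= ecdf_lt W0 W1).
Proof.
move=> tstar_in n0 /andP[tau0 tau1] null W1 W0.
have Y1E : nabla tstar (fun t => (if (tstar <= t)%N then a t else 0) + th1 + g t + e1 t)
    = alpha0 + nabla tstar g + W1.
  by rewrite !nablaD // nabla_effect // nabla_cst // null addr0.
have Y0E i : nabla tstar (fun t => th0 i + g t + e0 i t) = nabla tstar g + W0 i.
  by rewrite !nablaD // nabla_cst // add0r.
have avgE : avg (fun i => nabla tstar (fun t => th0 i + g t + e0 i t))
    = nabla tstar g + avg W0.
  by under eq_fun => i do rewrite Y0E; exact: avg_addl.
rewrite /reject /alpha_hat /W_hat Y1E avgE; set A := avg W0.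
have -> : alpha0 + nabla tstar g + W1 - (nabla tstar g + A) - alpha0 = W1 - A by lra.
have -> : (fun i => nabla tstar (fun t => th0 i + g t + e0 i t) - (nabla tstar g + A))
    = (fun i => W0 i - A) by apply: funext => i; rewrite Y0E; lra.
rewrite lt_quantile ?quantile_lt ?ecdf_shift ?ecdf_lt_shift //; apply/andP; lra.
Qed.

Section Probability.
Variables (R : realType) (d : measure_display) (Omega : measurableType d).
Variable P : probability Omega R.

Definition pr (A : set Omega) : R := fine (P A).

Lemma prE A : measurable A -> P A = (pr A)%:E.
Proof. by move=> mA; rewrite /pr fineK // fin_num_measure. Qed.

Lemma pr_le A B : measurable A -> measurable B -> A `<=` B -> pr A <= pr B.
Proof.
by move=> mA mB AB; rewrite -lee_fin -!prE // le_measure ?inE.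
Qed.

Lemma pr_setU_le A B : measurable A -> measurable B -> pr (A `|` B) <= pr A + pr B.
Proof.
by move=> mA mB; rewrite -lee_fin EFinD -!prE ?measureU2 //; exact: measurableU.
Qed.

Lemma pr_setU A B : measurable A -> measurable B -> A `&` B = set0 ->
  pr (A `|` B) = pr A + pr B.
Proof.
move=> mA mB AB0; apply: EFin_inj; rewrite EFinD -!prE ?measureU //.
exact: measurableU.
Qed.

Lemma pr_setC A : measurable A -> pr (~` A) = 1 - pr A.
Proof.
move=> mA; apply: EFin_inj; rewrite EFinB -!prE ?probability_setC //.
exact: measurableC.
Qed.

Lemma measurable_event (b : Omega -> bool) : measurable_fun setT b ->
  measurable [set w | b w].
Proof. by move=> mb; rewrite -[X in measurable X]setTI; exact: mb. Qed.

Lemma measurable_le_cst (Y : Omega -> R) : measurable_fun setT Y ->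
  forall c, measurable [set w | Y w <= c].
Proof. by move=> mY c; apply: measurable_event; exact: measurable_realfun.measurable_fun_ler. Qed.

Lemma measurable_lt_cst (Y : Omega -> R) : measurable_fun setT Y ->
  forall c, measurable [set w | Y w < c].
Proof. by move=> mY c; apply: measurable_event; exact: measurable_realfun.measurable_fun_ltr. Qed.

Lemma measurable_freq (n : nat) (b : 'I_n -> Omega -> bool) :
  (forall i, measurable_fun setT (b i)) ->
  measurable_fun setT (fun w => freq (fun i => b i w) : R).
Proof.
move=> mb; apply: measurable_realfun.measurable_funM; first exact: measurable_cst.
apply: measurable_sum => i.
exact: (measurableT_comp (f := fun x : bool => (x : nat)%:R : R)).
Qed.

Section ContinuousCdf.
Variables (X : Omega -> R) (F : R -> R).
Hypothesis mX : measurable_fun setT X.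
Hypothesis cdfX : forall c, P [set w | X w <= c] = (F c)%:E.
Hypothesis F_cont : forall x, {for x, continuous F}.

(* F is the cdf of X seen as a random variable of the library, whose limits
   at -oo and +oo are known. *)
Let Xrv : {RV P >-> R} := mfun_Sub (mem_set mX : X \in mfun).

Let F_cdf c : F c = fine (cdf Xrv c).
Proof.
rewrite /cdf /distribution /pushforward /=.
suff -> : Xrv @^-1` `]-oo, c] = [set w | X w <= c] by rewrite cdfX.
by apply/seteqP; split => w /=; rewrite in_itv.
Qed.

Lemma cdf_hits lo hi : lo < hi -> lo < 1 -> 0 < hi -> exists c, lo < F c < hi.
Proof.
move=> lohi lo1 hi0.
have Fy1 : F @ +oo%R --> (1 : R).
  by rewrite (funext F_cdf); apply: fine_cvg; exact: cvg_cdfy1.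
have FNy0 : F @ -oo%R --> (0 : R).
  by rewrite (funext F_cdf); apply: fine_cvg; exact: cvg_cdfNy0.
pose l := Num.max lo 0; pose h := Num.min hi 1.
have lh : l < h by rewrite /l /h gt_max !lt_min lohi lo1 hi0 ltr01.
have [lol l0] : lo <= l /\ 0 <= l by rewrite /l !le_max !lexx orbT.
have [hhi h1] : h <= hi /\ h <= 1 by rewrite /h !ge_min !lexx orbT.
set v := (l + h) / 2.
have [v0 v1] : 0 < v /\ v < 1 by rewrite /v; split; lra.
have [x0 Fx0] := filter_ex (cvgr_lt _ FNy0 _ v0).
have [x1 [Fx1 x01]] : exists x1, v < F x1 /\ x0 <= x1.
  have large : \forall x \near +oo%R, v < F x /\ x0 <= x.
    near=> x; split; near: x; first exact: cvgr_gt _ Fy1 _ v1.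
    exact: nbhs_pinfty_ge (num_real x0).
  exact: filter_ex large.
have [|c _ Fc] := @IVT R F x0 x1 v x01 (continuous_subspaceT F_cont).
  by rewrite ge_min le_max (ltW Fx0) (ltW Fx1) orbT.
by exists c; rewrite Fc /v; apply/andP; split; lra.
Unshelve. all: by end_near.
Qed.
End ContinuousCdf.

(* No independence between the observation and the
   empirical cdf is required: H n is only assumed to be squeezed between values
   of the empirical cdf at points below and above the observation. *)
Section AsymptoticUniformity.
Variables (X : nat -> Omega -> R) (F : R -> R).
Variable Fh : nat -> Omega -> R -> R.
Variable H : nat -> Omega -> R.
Hypothesis mX : forall n, measurable_fun setT (X n).
Hypothesis cdfX : forall n c, P [set w | X n w <= c] = (F c)%:E.
Hypothesis F_cont : forall x, {for x, continuous F}.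
Hypothesis mFh : forall n c, measurable_fun setT (fun w => Fh n w c).
Hypothesis Fh_cvg : forall c eps, 0 < eps ->
  P [set w | eps <= `|Fh n w c - F c|] @[n --> \oo] --> 0%E.
Hypothesis mH : forall n, measurable_fun setT (H n).
Hypothesis H_ge : forall n w c, c < X n w -> Fh n w c <= H n w.
Hypothesis H_le : forall n w c, X n w <= c -> H n w <= Fh n w c.

Let Dev n c eta := [set w | eta <= `|Fh n w c - F c|].

Let measurable_Dev n c eta : measurable (Dev n c eta).
Proof.
apply: measurable_event; apply: measurable_realfun.measurable_fun_ler.
  exact: measurable_cst.
apply: measurableT_comp; first exact: measurable_realfun.normr_measurable.
by apply: measurable_realfun.measurable_funB => //; exact: measurable_cst.
Qed.

Let Dev_small c eta del : 0 < eta -> 0 < del ->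
  \forall n \near \oo, pr (Dev n c eta) <= del.
Proof.
move=> eta0 del0; have := Fh_cvg c eta0.
move=> /fine_cvg /cvgr0_norm_le /(_ del del0).
by apply: filterS => n; apply: le_trans; exact: ler_norm.
Qed.

Let F_pr n c : F c = pr [set w | X n w <= c].
Proof. by rewrite /pr cdfX. Qed.

(* Choose c with F c slightly above a: off the event {X n <= c}, a statistic
   below a forces the empirical cdf at c to deviate from F c. *)
Lemma pr_lt_upper a e : 0 < a < 1 -> 0 < e ->
  \forall n \near \oo, pr [set w | H n w < a] <= a + e.
Proof.
case/andP=> a0 a1 e0.
have [c /andP[aFc Fce]] : exists c, a < F c < a + e / 2.
  by apply: (cdf_hits (mX 0) (cdfX 0) F_cont); lra.
near=> n.
have small : pr (Dev n c (F c - a)) <= e / 2.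
  by near: n; apply: Dev_small; lra.
have cover : [set w | H n w < a] `<=` [set w | X n w <= c] `|` Dev n c (F c - a).
  move=> w /= Ha; have [|cX] := leP (X n w) c; first by left.
  by right; rewrite /Dev /= ler_normr; apply/orP; right; have := H_ge cX; lra.
have mXc := measurable_le_cst (mX n) c; have mDev := measurable_Dev n c (F c - a).
have := pr_le (measurable_lt_cst (mH n) a) (measurableU _ _ mXc mDev) cover.
by have := pr_setU_le mXc mDev; rewrite -F_pr; lra.
Unshelve. all: by end_near.
Qed.

(* Symmetrically, with F c slightly below a: on {X n <= c}, a statistic at
   least a again forces a deviation at c. *)
Lemma pr_lt_lower a e : 0 < a < 1 -> 0 < e ->
  \forall n \near \oo, a - e <= pr [set w | H n w < a].
Proof.
case/andP=> a0 a1 e0.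
have [c /andP[Fce Fca]] : exists c, a - e / 2 < F c < a.
  by apply: (cdf_hits (mX 0) (cdfX 0) F_cont); lra.
near=> n.
have small : pr (Dev n c (a - F c)) <= e / 2.
  by near: n; apply: Dev_small; lra.
have cover : [set w | X n w <= c] `<=` [set w | H n w < a] `|` Dev n c (a - F c).
  move=> w /= Xc; have [Ha|aH] := ltP (H n w) a; first by left.
  by right; rewrite /Dev /= ler_normr; apply/orP; left; have := H_le Xc; lra.
have mXc := measurable_le_cst (mX n) c; have mDev := measurable_Dev n c (a - F c).
have := pr_le mXc (measurableU _ _ (measurable_lt_cst (mH n) a) mDev) cover.
by have := pr_setU_le (measurable_lt_cst (mH n) a) mDev; rewrite -F_pr; lra.
Unshelve. all: by end_near.
Qed.

Lemma pr_lt_cvg a : 0 < a < 1 -> pr [set w | H n w < a] @[n --> \oo] --> a.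
Proof.
move=> a01; apply/cvgrPdist_le => e e0.
near=> n.
have up : pr [set w | H n w < a] <= a + e by near: n; exact: pr_lt_upper.
have lo : a - e <= pr [set w | H n w < a] by near: n; exact: pr_lt_lower.
by rewrite ler_norml; apply/andP; split; lra.
Unshelve. all: by end_near.
Qed.

End AsymptoticUniformity.

Lemma measurable_ecdf n (Z : 'I_n -> Omega -> R) (x : Omega -> R) :
  (forall i, measurable_fun setT (Z i)) -> measurable_fun setT x ->
  measurable_fun setT (fun w => ecdf (fun i => Z i w) (x w)).
Proof.
move=> mZ mx; apply: (measurable_freq (b := fun i w => Z i w <= x w)) => i.
exact: measurable_realfun.measurable_fun_ler.
Qed.

Lemma measurable_ecdf_lt n (Z : 'I_n -> Omega -> R) (x : Omega -> R) :
  (forall i, measurable_fun setT (Z i)) -> measurable_fun setT x ->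
  measurable_fun setT (fun w => ecdf_lt (fun i => Z i w) (x w)).
Proof.
move=> mZ mx; apply: (measurable_freq (b := fun i w => Z i w < x w)) => i.
exact: measurable_realfun.measurable_fun_ltr.
Qed.

Section EmpiricalUniformity.
(* The size argument of the sample Z n stays explicit. *)
Unset Implicit Arguments.
Variables (X : nat -> Omega -> R) (Z : forall n, 'I_n -> Omega -> R) (F : R -> R).
Hypothesis mX : forall n, measurable_fun setT (X n).
Hypothesis mZ : forall n i, measurable_fun setT (Z n i).
Hypothesis cdfX : forall n c, P [set w | X n w <= c] = (F c)%:E.
Hypothesis F_cont : forall x, {for x, continuous F}.
Hypothesis ecdf_cvg : forall c eps, 0 < eps ->
  P [set w | eps <= `|ecdf (fun i => Z n i w) c - F c|] @[n --> \oo] --> 0%E.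
Set Implicit Arguments.

Let mecdf_cst n c : measurable_fun setT (fun w => ecdf (fun i => Z n i w) c).
Proof. exact: measurable_ecdf. Qed.

Lemma ecdf_uniform a : 0 < a < 1 ->
  pr [set w | ecdf (fun i => Z n i w) (X n w) < a] @[n --> \oo] --> a.
Proof.
apply: (pr_lt_cvg mX cdfX F_cont mecdf_cst ecdf_cvg) => [n|n w c cX|n w c Xc].
- exact: measurable_ecdf.
- exact/ecdf_le/ltW.
- exact: ecdf_le.
Qed.

Lemma ecdf_lt_uniform a : 0 < a < 1 ->
  pr [set w | ecdf_lt (fun i => Z n i w) (X n w) < a] @[n --> \oo] --> a.
Proof.
apply: (pr_lt_cvg mX cdfX F_cont mecdf_cst ecdf_cvg) => [n|n w c|n w c].
- exact: measurable_ecdf_lt.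
- exact: ecdf_le_ecdf_lt.
- exact: ecdf_lt_le.
Qed.

End EmpiricalUniformity.

Lemma pr_setU_setC A B : measurable A -> measurable B -> A `<=` B ->
  pr (A `|` ~` B) = pr A + (1 - pr B).
Proof.
move=> mA mB AB; rewrite pr_setU ?pr_setC //; first exact: measurableC.
by apply/seteqP; split => // w [/AB].
Qed.

Lemma pr_cvg (A : nat -> set Omega) (l : R) :
  (\forall n \near \oo, measurable (A n)) ->
  pr (A n) @[n --> \oo] --> l -> P (A n) @[n --> \oo] --> l%:E.
Proof.
by move=> mA; apply: cvg_EFin; apply: filterS mA => n; exact: fin_num_measure.
Qed.

End Probability.

(* Index n = N_0 (number of control units). For each n: treated unit (paper's
   unit 1) has fixed effect theta1 n, errors eta1 n t, fixed effects alpha n t;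
   control unit i : 'I_n has theta0 n i, eta0 n i t; time effects gam n t. *)
Theorem corollary1 (R : realType) (d : measure_display) (Omega : measurableType d)
  (P : probability Omega R) (T tstar : nat) (htstar : (0 < tstar < T)%N)
  (alpha : nat -> 'I_T -> R)
  (theta1 : nat -> Omega -> R) (eta1 : nat -> 'I_T -> Omega -> R)
  (theta0 : forall n : nat, 'I_n -> Omega -> R)
  (eta0 : forall n : nat, 'I_n -> 'I_T -> Omega -> R)
  (gam : nat -> 'I_T -> Omega -> R)
  (F : R -> R) (alpha0 tau : R) :
  (forall n, measurable_fun setT (theta1 n)) ->
  (forall n t, measurable_fun setT (eta1 n t)) ->
  (forall n i, measurable_fun setT (theta0 n i)) ->
  (forall n i t, measurable_fun setT (eta0 n i t)) ->
  (forall n t, measurable_fun setT (gam n t)) ->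
  let W1 n := fun w => nabla tstar (fun t => eta1 n t w) in
  let W0 n i := fun w => nabla tstar (fun t => eta0 n i t w) in
  (* Assumption 1 (i): mean zero *)
  (forall n, ('E_P[W1 n] = 0)%E) ->
  (forall n i, ('E_P[W0 n i] = 0)%E) ->
  (* Assumption 1 (ii): common marginal cdf F, continuous, finite 2nd moment *)
  (forall x : R, {for x, continuous F}) ->
  (forall n c, P [set w | W1 n w <= c] = (F c)%:E) ->
  (forall n i c, P [set w | W0 n i w <= c] = (F c)%:E) ->
  (forall n, P.-integrable setT (fun w => (W1 n w ^+ 2)%:E)) ->
  (forall n i, P.-integrable setT (fun w => (W0 n i w ^+ 2)%:E)) ->
  (* Assumption 1 (iii): convergence in probability as N_0 -> oo *)
  (forall eps : R, 0 < eps ->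
     P [set w | eps <= `| avg (fun i => W0 n i w) |] @[n --> \oo] --> 0%E) ->
  (forall c eps : R, 0 < eps ->
     P [set w | eps <= `| ecdf (fun i => W0 n i w) c - F c |] @[n --> \oo]
       --> 0%E) ->
  (* level and null hypothesis alpha = alpha0 *)
  0 < tau < 1 ->
  (forall n, (T - tstar)%:R^-1 * (\sum_(t < T | (tstar <= t)%N) alpha n t)
             = alpha0) ->
  let Y1 n := fun (t : 'I_T) (w : Omega) => (if (tstar <= t)%N then alpha n t else 0)
                         + theta1 n w + gam n t w + eta1 n t w in
  let Y0 n := fun (i : 'I_n) (t : 'I_T) (w : Omega) => theta0 n i w + gam n t w + eta0 n i t w in
  P [set w | reject tstar (fun t => Y1 n t w) (fun i t => Y0 n i t w) alpha0 tau]
    @[n --> \oo] --> (tau%:E).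
Proof.
move=> _ me1 _ me0 _ W1 W0 _ _ F_cont cdfW1 _ _ _ _ ecdf_cvg /andP[tau0 tau1] null Y1 Y0.
have mW1 n : measurable_fun setT (W1 n) by exact: measurable_nabla.
have mW0 n i : measurable_fun setT (W0 n i) by exact: measurable_nabla.
pose lowerE n := [set w | ecdf (fun i => W0 n i w) (W1 n w) < tau / 2].
pose upperE n := [set w | ecdf_lt (fun i => W0 n i w) (W1 n w) < 1 - tau / 2].
have mlower n : measurable (lowerE n) by apply/measurable_lt_cst/measurable_ecdf.
have mupper n : measurable (upperE n) by apply/measurable_lt_cst/measurable_ecdf_lt.
have lower_upper n : lowerE n `<=` upperE n.
  rewrite /lowerE /upperE => w /= lo; apply: le_lt_trans (ecdf_lt_le_ecdf _ _) _; lra.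
have rejectE : \forall n \near \oo,
    [set w | reject tstar (fun t => Y1 n t w) (fun i t => Y0 n i t w) alpha0 tau]
    = lowerE n `|` ~` upperE n.
  near=> n; have n0 : (0 < n)%N by near: n; exists 1%N.
  apply/seteqP; split => w;
    rewrite /= /Y1 /Y0 (reject_tails _ _ _ _ _ htstar n0 _ (null n)) ?tau0 ?tau1 //.
    by case/orP => [lo | up]; [left | right; apply/negP; rewrite -leNgt].
  by case=> [lo | up]; apply/orP; [left | right; rewrite leNgt; apply/negP].
(* Both tails are asymptotically uniform, so their probabilities add to tau. *)
have lim : pr P (lowerE n) + (1 - pr P (upperE n)) @[n --> \oo] --> tau.
  have -> : tau = tau / 2 + (1 - (1 - tau / 2)) by lra.
  apply: cvgD; first by apply: (ecdf_uniform mW1 mW0 cdfW1 F_cont ecdf_cvg); lra.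
  apply: cvgB; first exact: cvg_cst.
  by apply: (ecdf_lt_uniform mW1 mW0 cdfW1 F_cont ecdf_cvg); lra.
apply: pr_cvg.
  by apply: filterS rejectE => n ->; apply: measurableU => //; exact: measurableC.
apply: cvg_trans lim; apply: near_eq_cvg; apply: filterS rejectE => n ->.
by rewrite pr_setU_setC.
Unshelve. all: by end_near.
Qed.
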